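(* Let $\mathcal R\subset\mathcal G$ be finite with $\mathrm{id}\in\mathcal R$. Then the seminorms $\|\cdot\|_{\mathcal R,0}$ and $[\cdot]_{\mathcal R,0}$ on $U_{\mathrm{per}}$ are equivalent.
   Context: Euclidean group: $\mathrm E(n)$ consists of pairs $(A|b)$, $A\in\mathrm O(n)$, $b\in\mathbb R^n$, acting by $(A|b)\cdot x=Ax+b$, product $(A_1|b_1)(A_2|b_2)=(A_1A_2|b_1+A_1b_2)$; $\mathrm{rot}(A|b)=A$. Standing setting: $d=d_1+d_2$; $\mathcal S<\mathrm E(d_2)$ is a space group with translation subgroup $\mathcal T_{\mathcal S}$; $A\oplus(B|b)=(\mathrm{diag}(A,B)|(0,b))$. $\mathcal G$ is a discrete subgroup of $\mathrm E(d)$ contained in $\{A\oplus s:A\in\mathrm O(d_1),s\in\mathcal S\}$ projecting onto $\mathcal S$; $\mathcal T\subset\mathcal G$ maps bijectively onto $\mathcal T_{\mathcal S}$ under the projection. There is $m_0$ such that $\mathcal T^N=\{t^N:t\in\mathcal T\}$ is a normal finite-index subgroup of $\mathcal G$ isomorphic to $\mathbb Z^{d_2}$ iff $N\in\mathcal M=m_0\mathbb N$; $\mathcal C_N$ is a fixed set of representatives of $\mathcal G/\mathcal T^N$. $U_{\mathrm{per}}$: maps $u:\mathcal G\to\mathbb R^d$ with $u(gt)=u(g)$ for all $g\in\mathcal G$, $t\in\mathcal T^N$, for some $N\in\mathcal M$ ($\mathcal T^N$-periodic). $x_0\in\mathbb R^d$ with $g\mapsto g\cdot x_0$ injective; $d_{\mathrm{aff}}=\dim\mathrm{aff}(\mathcal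 G\cdot x_0)$; $\mathcal G\cdot x_0\subset\{0_{d-d_{\mathrm{aff}}}\}\times\mathbb R^{d_{\mathrm{aff}}}$ and $\mathcal G$ acts trivially on $\mathbb R^{d-d_{\mathrm{aff}}}\times\{0\}$. Let $\mathrm{Skew}_{0,d_2}(d)=\{\begin{pmatrix}S_1&S_2\\-S_2^T&0\end{pmatrix}:S_1\in\mathrm{Skew}(d_1),S_2\in\mathbb R^{d_1\times d_2}\}$. For $\mathcal R\subset\mathcal G$: $U_{\mathrm{trans}}(\mathcal R)=\{u:\mathcal R\to\mathbb R^d:\exists a\ \forall g:\mathrm{rot}(g)u(g)=a\}$, $U_{\mathrm{rot},0}(\mathcal R)=\{u:\mathcal R\to\mathbb R^d:\exists S\in\mathrm{Skew}_{0,d_2}(d)\ \forall g\in\mathcal R:\mathrm{rot}(g)u(g)=S(g\cdot x_0-x_0)\}$, $U_{\mathrm{iso},0}(\mathcal R)=U_{\mathrm{trans}}(\mathcal R)+U_{\mathrm{rot},0}(\mathcal R)$. For finite $\mathcal R$, distances are in the Euclidean norm of $(\mathbb R^d)^{\mathcal R}$; the discrete derivative is $\nabla_{\mathcal R}u(g)(h)=u(gh)-\mathrm{rot}(h)^Tu(g)$, $h\in\mathcal R$. For $\mathcal T^N$-periodic $u$: $\|u\|_{\mathcal R,0}=\big(\frac1{|\mathcal C_N|}\sum_{g\in\mathcal C_N}\mathrm{dist}(u(g\,\cdot)|_{\mathcal R},U_{\mathrm{iso},0}(\mathcal R))^2\big)^{1/2}$ and $[u]_{\mathcal R,0}=\big(\frac1{|\mathcal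 C_N|}\sum_{g\in\mathcal C_N}\mathrm{dist}(\nabla_{\mathcal R}u(g),U_{\mathrm{rot},0}(\mathcal R))^2\big)^{1/2}$. *)

From HB Require Import structures.
From mathcomp Require Import all_boot all_order all_algebra.
From mathcomp Require Import classical_sets reals.
Set Implicit Arguments. Unset Strict Implicit. Unset Printing Implicit Defensive.
Import Order.TTheory GRing.Theory Num.Theory.
Local Open Scope ring_scope.
Local Open Scope classical_set_scope.

Section Euclid.
Variable R : realType.

Definition Eucl (n : nat) := ('M[R]_n * 'cV[R]_n)%type.

Definition orthogonal n (A : 'M[R]_n) : Prop := A^T *m A = 1%:M.
Definition inE n (g : Eucl n) : Prop := orthogonal g.1.

Definition rot n (g : Eucl n) : 'M[R]_n := g.1.
Definition eid n : Eucl n := (1%:M, 0).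
Definition emul n (g h : Eucl n) : Eucl n := (g.1 *m h.1, g.2 + g.1 *m h.2).
(* inverse of an element of E(n) (A orthogonal): (A^T | - A^T b) *)
Definition einv n (g : Eucl n) : Eucl n := (g.1^T, - (g.1^T *m g.2)).
Definition act n (g : Eucl n) (x : 'cV[R]_n) : 'cV[R]_n := g.1 *m x + g.2.
Definition epow n (g : Eucl n) (k : nat) : Eucl n := iter k (emul g) (eid n).

Definition is_subgroup n (H : Eucl n -> Prop) : Prop :=
  [/\ forall g, H g -> inE g,
      H (eid n),
      forall g h, H g -> H h -> H (emul g h) &
      forall g, H g -> H (einv g)].

Definition is_discrete n (H : Eucl n -> Prop) : Prop :=
  exists2 eps : R, 0 < eps &
    forall g, H g ->
      (forall i j, `|g.1 i j - (1%:M : 'M[R]_n) i j| < eps) ->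
      (forall i, `|g.2 i 0| < eps) -> g = eid n.

Definition sqnorm n (x : 'cV[R]_n) : R := \sum_i (x i 0) ^+ 2.

(* cocompact: S . K = R^n for a compact K; equivalently (K inside a ball)
   every point is within a bounded distance of the orbit of 0. *)
Definition is_cocompact n (H : Eucl n -> Prop) : Prop :=
  exists r : R, forall x : 'cV[R]_n, exists2 s, H s & sqnorm (x - act s 0) <= r.

Definition space_group n (S : Eucl n -> Prop) : Prop :=
  [/\ is_subgroup S, is_discrete S & is_cocompact S].

Definition transl_sub n (S : Eucl n -> Prop) (s : Eucl n) : Prop :=
  S s /\ s.1 = 1%:M.

Definition dsum d1 d2 (A : 'M[R]_d1) (s : Eucl d2) : Eucl (d1 + d2) :=
  (block_mx A 0 0 s.1, col_mx 0 s.2).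
Definition proj d1 d2 (g : Eucl (d1 + d2)) : Eucl d2 :=
  (drsubmx g.1, dsubmx g.2).

Definition powset n (T : Eucl n -> Prop) (N : nat) (x : Eucl n) : Prop :=
  exists2 t, T t & x = epow t N.

Definition normal_fi_Zk n (G H : Eucl n -> Prop) (k : nat) : Prop :=
  [/\ is_subgroup H, (forall h, H h -> G h),
      (forall g h, G g -> H h -> H (emul (emul g h) (einv g))),
      (exists cs : seq (Eucl n), forall g, G g ->
           exists2 c, c \in cs & G c /\ H (emul (einv c) g)) &
      (exists phi : 'rV[int]_k -> Eucl n,
          [/\ forall a, H (phi a),
              forall h, H h -> exists a, phi a = h,
              injective phi &
              forall a b, phi (a + b) = emul (phi a) (phi b)])].

(* affine dimension of a set of points: dimension of the span of all
   differences p - q (p, q in P) *)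
Definition diff_mx n k (p q : 'I_k -> 'cV[R]_n) : 'M[R]_(k, n) :=
  \matrix_(l, i) (p l - q l) i 0.
Definition aff_dim_is n (P : 'cV[R]_n -> Prop) (k : nat) : Prop :=
  (exists p q : 'I_k -> 'cV[R]_n,
      (forall l, P (p l) /\ P (q l)) /\ row_free (diff_mx p q)) /\
  (forall p q : 'I_k.+1 -> 'cV[R]_n,
      (forall l, P (p l) /\ P (q l)) -> ~~ row_free (diff_mx p q)).

Definition standing_setting (d1 d2 : nat)
    (S : Eucl d2 -> Prop) (G : Eucl (d1 + d2) -> Prop)
    (T : Eucl (d1 + d2) -> Prop) (m0 : nat)
    (C : nat -> seq (Eucl (d1 + d2))) (x0 : 'cV[R]_(d1 + d2)) (daff : nat)
    : Prop :=
  [/\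
      space_group S,
      [/\ is_subgroup G, is_discrete G,
      (forall g, G g -> exists A s, [/\ orthogonal A, S s & g = dsum A s]) /\
      (forall s, S s -> exists2 g, G g & proj g = s) &
      [/\ forall t, T t -> G t,
          forall t, T t -> transl_sub S (proj t),
          forall t t', T t -> T t' -> proj t = proj t' -> t = t' &
          forall s, transl_sub S s -> exists2 t, T t & proj t = s]],
      (0 < m0)%N /\
      (forall N, (0 < N)%N -> (normal_fi_Zk G (powset T N) d2 <-> (m0 %| N)%N)),
      (* C N : a set of representatives of G / T^N, for N in M *)
      (forall N, (0 < N)%N -> (m0 %| N)%N ->
         [/\ uniq (C N), (forall c, c \in C N -> G c) &
             forall g, G g ->
               (exists2 c, c \in C N & powset T N (emul (einv c) g)) /\
               (forall c c', c \in C N -> c' \in C N ->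
                  powset T N (emul (einv c) g) -> powset T N (emul (einv c') g) ->
                  c = c')]) &
      [/\ (forall g g', G g -> G g' -> act g x0 = act g' x0 -> g = g'),
          (daff <= d1 + d2)%N,
          aff_dim_is (fun p => exists2 g, G g & p = act g x0) daff,
          (forall g, G g -> forall i : 'I_(d1 + d2),
               (i < d1 + d2 - daff)%N -> (act g x0) i 0 = 0) &
          (forall g, G g -> forall y : 'cV[R]_(d1 + d2),
               (forall i : 'I_(d1 + d2), (d1 + d2 - daff <= i)%N -> y i 0 = 0) ->
               rot g *m y = y)]].

Definition periodic d (G T : Eucl d -> Prop) (N : nat)
    (u : Eucl d -> 'cV[R]_d) : Prop :=
  forall g t, G g -> powset T N t -> u (emul g t) = u g.

Definition skew0 d1 d2 (M : 'M[R]_(d1 + d2)) : Prop :=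
  M^T = - M /\ drsubmx M = 0.

Definition Utrans d (Rl : seq (Eucl d)) (w : Eucl d -> 'cV[R]_d) : Prop :=
  exists a : 'cV[R]_d, forall g, g \in Rl -> rot g *m w g = a.

Definition Urot0 d1 d2 (x0 : 'cV[R]_(d1 + d2)) (Rl : seq (Eucl (d1 + d2)))
    (w : Eucl (d1 + d2) -> 'cV[R]_(d1 + d2)) : Prop :=
  exists2 M : 'M[R]_(d1 + d2), skew0 M &
    forall g, g \in Rl -> rot g *m w g = M *m (act g x0 - x0).

Definition Uiso0 d1 d2 (x0 : 'cV[R]_(d1 + d2)) (Rl : seq (Eucl (d1 + d2)))
    (w : Eucl (d1 + d2) -> 'cV[R]_(d1 + d2)) : Prop :=
  exists w1 w2, [/\ Utrans Rl w1, Urot0 x0 Rl w2 &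
                   forall g, g \in Rl -> w g = w1 g + w2 g].

Definition distR d (Rl : seq (Eucl d)) (v : Eucl d -> 'cV[R]_d)
    (P : (Eucl d -> 'cV[R]_d) -> Prop) : R :=
  inf [set r | exists2 w, P w & r = Num.sqrt (\sum_(h <- Rl) sqnorm (v h - w h))].

Definition gradR d (u : Eucl d -> 'cV[R]_d) (g : Eucl d) : Eucl d -> 'cV[R]_d :=
  fun h => u (emul g h) - (rot h)^T *m u g.

Definition norm_R0 d1 d2 (x0 : 'cV[R]_(d1 + d2)) (Rl : seq (Eucl (d1 + d2)))
    (C : nat -> seq (Eucl (d1 + d2))) (N : nat)
    (u : Eucl (d1 + d2) -> 'cV[R]_(d1 + d2)) : R :=
  Num.sqrt ((size (C N))%:R^-1 *
    \sum_(g <- C N) (distR Rl (fun h => u (emul g h)) (Uiso0 x0 Rl)) ^+ 2).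

Definition semi_R0 d1 d2 (x0 : 'cV[R]_(d1 + d2)) (Rl : seq (Eucl (d1 + d2)))
    (C : nat -> seq (Eucl (d1 + d2))) (N : nat)
    (u : Eucl (d1 + d2) -> 'cV[R]_(d1 + d2)) : R :=
  Num.sqrt ((size (C N))%:R^-1 *
    \sum_(g <- C N) (distR Rl (gradR u g) (Urot0 x0 Rl)) ^+ 2).

End Euclid.

(** The comparison holds pointwise, for each representative g, between the
    distance of u(g .) to U_iso,0 and that of the discrete derivative of u at g
    to U_rot,0; averaging over C_N then compares the seminorms.  Since
    ∇u(g)(h) = u(gh) - rot(h)^T u(g), subtracting a map of U_rot,0 from ∇u(g)
    amounts to subtracting from u(g .) a map of U_iso,0 whose translation part
    is u(g); this gives the first bound with constant 1.  Conversely, if w is an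
    isometry with translation part a, then w - rot(.)^T a lies in U_rot,0 (it is
    the rotation part of w, which vanishes at id), and the residual
    ∇u(g) - (w - rot(.)^T a) equals x - rot(.)^T x(id) with x = u(g .) - w;
    as id is in R, its size is controlled by that of x. *)

From Pilot Require Import Defs.
From HB Require Import structures.
From mathcomp Require Import all_boot all_order all_algebra.
From mathcomp Require Import classical_sets reals.
From mathcomp Require Import ring lra.
Import Order.TTheory GRing.Theory Num.Theory.
Local Open Scope ring_scope.
Local Open Scope classical_set_scope.

Section RealFacts.
Variable R : realType.

Lemma inf_le_mul_inf (E F : set R) (k : R) : 0 < k -> F !=set0 ->
  (forall e, E e -> 0 <= e) -> (forall f, F f -> exists2 e, E e & e <= k * f) ->
  inf E <= k * inf F.
Proof.
move=> k_gt0 [f0 Ff0] E_ge0 EF.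
have E_lb := ge_inf (ex_intro _ 0 E_ge0 : has_lbound E).
rewrite -ler_pdivrMl //; apply: lb_le_inf; first by exists f0.
move=> f /EF [e Ee le_ef].
by rewrite ler_pdivrMl //; exact: le_trans (E_lb e Ee) le_ef.
Qed.

Lemma sqrt_mean_sqr_le (I : Type) (s : seq I) (c k : R) (a b : I -> R) :
  0 <= c -> 0 <= k -> (forall i, 0 <= a i) -> (forall i, a i <= k * b i) ->
  Num.sqrt (c * \sum_(i <- s) a i ^+ 2) <= k * Num.sqrt (c * \sum_(i <- s) b i ^+ 2).
Proof.
move=> c_ge0 k_ge0 a_ge0 le_ab.
have sum_sqr_ge0 (f : I -> R) : 0 <= \sum_(i <- s) f i ^+ 2.
  by apply: sumr_ge0 => i _; exact: sqr_ge0.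
rewrite -(ger0_norm k_ge0) -sqrtr_sqr -sqrtrM ?sqr_ge0 //.
rewrite ler_sqrt; last by rewrite !mulr_ge0 ?sqr_ge0.
rewrite mulrCA ler_wpM2l // mulr_sumr; apply: ler_sum => i _.
by rewrite -exprMn ler_pXn2r ?nnegrE // (le_trans (a_ge0 i)).
Qed.

End RealFacts.

Section SquaredNorm.
Variables (R : realType) (n : nat).
Implicit Types x y : 'cV[R]_n.

Lemma sqnormE x : sqnorm x = (x^T *m x) 0 0.
Proof. by rewrite /sqnorm !mxE; apply: eq_bigr => i _; rewrite !mxE expr2. Qed.

Lemma sqnorm_ge0 x : 0 <= sqnorm x.
Proof. by apply: sumr_ge0 => i _; exact: sqr_ge0. Qed.

Lemma sqnorm_trmx_orthogonal (Q : 'M[R]_n) x :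
  Defs.orthogonal Q -> sqnorm (Q^T *m x) = sqnorm x.
Proof.
move=> /mulmx1C QQT; rewrite !sqnormE trmx_mul trmxK.
by rewrite -mulmxA (mulmxA Q) QQT mul1mx.
Qed.

Lemma sqnormB_le x y : sqnorm (x - y) <= 2 * sqnorm x + 2 * sqnorm y.
Proof.
rewrite /sqnorm !mulr_sumr -big_split /=; apply: ler_sum => i _.
rewrite !mxE -subr_ge0.
have -> : 2 * x i 0 ^+ 2 + 2 * y i 0 ^+ 2 - (x i 0 - y i 0) ^+ 2 = (x i 0 + y i 0) ^+ 2.
  by ring.
exact: sqr_ge0.
Qed.

End SquaredNorm.

Arguments sqnorm_trmx_orthogonal {R n Q}.

Section Distance.
Variables (R : realType) (d : nat) (Rl : seq (Eucl R d)).
Implicit Types (v w : Eucl R d -> 'cV[R]_d) (P Q : (Eucl R d -> 'cV[R]_d) -> Prop).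

Lemma distR_ge0 v P : 0 <= distR Rl v P.
Proof.
rewrite /distR; set E := (X in inf X).
have [[r Er]|E0] := boolp.pselect (E !=set0).
  by apply: lb_le_inf => [|_ [w _ ->]]; [exists r | exact: sqrtr_ge0].
rewrite (_ : E = set0) ?inf0 //; apply/seteqP; split=> // r Er.
by apply: E0; exists r.
Qed.

Lemma distR_le_mul v P v' Q (k : R) : 0 < k -> (exists w, Q w) ->
  (forall w, Q w -> exists2 w', P w' &
     \sum_(h <- Rl) sqnorm (v h - w' h) <= k ^+ 2 * \sum_(h <- Rl) sqnorm (v' h - w h)) ->
  distR Rl v P <= k * distR Rl v' Q.
Proof.
move=> k_gt0 [w0 Qw0] PQ; apply: inf_le_mul_inf => //.
- by exists (Num.sqrt (\sum_(h <- Rl) sqnorm (v' h - w0 h))), w0.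
- by move=> _ [w _ ->]; exact: sqrtr_ge0.
move=> _ [w /PQ [w' Pw' le_w'w] ->].
exists (Num.sqrt (\sum_(h <- Rl) sqnorm (v h - w' h))); first by exists w'.
rewrite -(gtr0_norm k_gt0) -sqrtr_sqr -sqrtrM ?sqr_ge0 // ler_sqrt //.
by rewrite mulr_ge0 ?sqr_ge0 // sumr_ge0 // => h _; exact: sqnorm_ge0.
Qed.

End Distance.

Lemma emulg1 (R : realType) n (g : Eucl R n) : emul g (eid R n) = g.
Proof. by case: g => A b; rewrite /emul /= mulmx1 mulmx0 addr0. Qed.

Section LocalSpaces.
Variables (R : realType) (d1 d2 : nat) (x0 : 'cV[R]_(d1 + d2)).
Variable Rl : seq (Eucl R (d1 + d2)).
Hypothesis Rl_orthogonal : forall h, h \in Rl -> Defs.orthogonal (Defs.rot h).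

Local Notation d := (d1 + d2).

Lemma skew0_0 : skew0 (0 : 'M[R]_d).
Proof.
split; first by rewrite trmx0 oppr0.
by apply/matrixP => i j; rewrite !mxE.
Qed.

Lemma Urot0_0 : Urot0 x0 Rl (fun _ => 0).
Proof. by exists 0 => [|g _]; rewrite ?mulmx0 ?mul0mx //; exact: skew0_0. Qed.

Lemma Utrans_rotT (a : 'cV[R]_d) : Utrans Rl (fun h => (Defs.rot h)^T *m a).
Proof. by exists a => h /Rl_orthogonal /mulmx1C hh; rewrite mulmxA hh mul1mx. Qed.

Lemma Uiso0_rotT_add (a : 'cV[R]_d) w :
  Urot0 x0 Rl w -> Uiso0 x0 Rl (fun h => (Defs.rot h)^T *m a + w h).
Proof. by move=> w_rot; exists (fun h => (Defs.rot h)^T *m a), w; split => //; exact: Utrans_rotT. Qed.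

Lemma Urot0_id w : eid R d \in Rl -> Urot0 x0 Rl w -> w (eid R d) = 0.
Proof.
move=> idR [M _ wM]; rewrite -[LHS]mul1mx.
by rewrite -[1%:M]/(Defs.rot (eid R d)) wM // /act mul1mx addr0 subrr mulmx0.
Qed.

Lemma Uiso0_subr_rotT w : eid R d \in Rl -> Uiso0 x0 Rl w ->
  Urot0 x0 Rl (fun h => w h - (Defs.rot h)^T *m w (eid R d)).
Proof.
move=> idR [w1 [w2 [[a w1a] [M skM w2M] wE]]].
have w_id : w (eid R d) = a.
  by rewrite wE // (Urot0_id _ idR (ex_intro2 _ _ M skM w2M)) addr0 -(w1a _ idR) mul1mx.
exists M => // h hR; rewrite w_id wE // mulmxBr mulmxDr w1a // w2M //.
by rewrite mulmxA (mulmx1C (Rl_orthogonal _ hR)) mul1mx addrAC subrr add0r.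
Qed.

Lemma sum_sqnorm_subr_rotT_le (x : Eucl R d -> 'cV[R]_d) : eid R d \in Rl ->
  \sum_(h <- Rl) sqnorm (x h - (Defs.rot h)^T *m x (eid R d))
    <= (2 + 2 * (size Rl)%:R) * \sum_(h <- Rl) sqnorm (x h).
Proof.
move=> idR; set S := \sum_(h <- Rl) sqnorm (x h).
have S_ge0 : 0 <= S by apply: sumr_ge0 => h _; exact: sqnorm_ge0.
have x_id_le : sqnorm (x (eid R d)) <= S.
  rewrite /S (perm_big _ (perm_to_rem idR)) big_cons lerDl.
  by apply: sumr_ge0 => h _; exact: sqnorm_ge0.
apply: (@le_trans _ _ (\sum_(h <- Rl) (2 * sqnorm (x h) + 2 * sqnorm (x (eid R d))))).
  rewrite big_seq [X in _ <= X]big_seq; apply: ler_sum => h hR.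
  by rewrite -(sqnorm_trmx_orthogonal (x (eid R d)) (Rl_orthogonal _ hR)) sqnormB_le.
rewrite big_split /= -mulr_sumr -/S big_const_seq count_predT iter_addr addr0.
rewrite -mulr_natr; have : (0 : R) <= (size Rl)%:R by []; nra.
Qed.

Lemma distR_Uiso0_le_grad u g :
  distR Rl (fun h => u (emul g h)) (Uiso0 x0 Rl) <= distR Rl (gradR u g) (Urot0 x0 Rl).
Proof.
rewrite -[X in _ <= X]mul1r; apply: distR_le_mul => //; first by exists (fun=> 0); exact: Urot0_0.
move=> w w_rot; exists (fun h => (Defs.rot h)^T *m u g + w h); first exact: Uiso0_rotT_add.
under eq_bigr => h _ do rewrite opprD addrA.
by rewrite /gradR expr1n mul1r lexx.
Qed.

Lemma distR_grad_le_Uiso0 u g : eid R d \in Rl ->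
  distR Rl (gradR u g) (Urot0 x0 Rl)
    <= (2 + 2 * (size Rl)%:R) * distR Rl (fun h => u (emul g h)) (Uiso0 x0 Rl).
Proof.
move=> idR; have size_ge0 : (0 : R) <= (size Rl)%:R by [].
apply: distR_le_mul; first lra.
  by exists (fun h => (Defs.rot h)^T *m 0 + 0); exact: Uiso0_rotT_add Urot0_0.
move=> w w_iso; exists (fun h => w h - (Defs.rot h)^T *m w (eid R d)); first exact: Uiso0_subr_rotT.
set x := fun h => u (emul g h) - w h.
have residual h :
    gradR u g h - (w h - (Defs.rot h)^T *m w (eid R d)) = x h - (Defs.rot h)^T *m x (eid R d).
  rewrite /x /gradR emulg1 mulmxBr !opprB -!addrA; congr (_ + _).
  by rewrite addrCA [RHS]addrCA [- _ - w h]addrC.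
under eq_bigr => h _ do rewrite residual.
apply: le_trans (sum_sqnorm_subr_rotT_le x idR) (ler_wpM2r _ _).
  by apply: sumr_ge0 => h _; exact: sqnorm_ge0.
by rewrite expr2 -[X in X <= _]mul1r ler_wpM2r //; lra.
Qed.

End LocalSpaces.

Theorem proposition3p17 (R : realType) (d1 d2 : nat)
    (S : Eucl R d2 -> Prop) (G : Eucl R (d1 + d2) -> Prop)
    (T : Eucl R (d1 + d2) -> Prop) (m0 : nat)
    (C : nat -> seq (Eucl R (d1 + d2))) (x0 : 'cV[R]_(d1 + d2)) (daff : nat) :
  standing_setting S G T m0 C x0 daff ->
  forall Rl : seq (Eucl R (d1 + d2)),
    uniq Rl -> (forall h, h \in Rl -> G h) -> eid R (d1 + d2) \in Rl ->
  exists c1 c2 : R, [/\ 0 < c1, 0 < c2 &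
    forall (N : nat) (u : Eucl R (d1 + d2) -> 'cV[R]_(d1 + d2)),
      (0 < N)%N -> (m0 %| N)%N -> periodic G T N u ->
      c1 * norm_R0 x0 Rl C N u <= semi_R0 x0 Rl C N u /\
      semi_R0 x0 Rl C N u <= c2 * norm_R0 x0 Rl C N u].
Proof.
move=> [_ [[G_E _ _ _] _ _ _] _ _ _] Rl _ Rl_G idR.
have Rl_orth h : h \in Rl -> Defs.orthogonal (Defs.rot h) by move/Rl_G/G_E.
have size_ge0 : (0 : R) <= (size Rl)%:R by [].
exists 1, (2 + 2 * (size Rl)%:R); split => //; first lra.
move=> N u _ _ _; have w_ge0 : 0 <= (size (C N))%:R^-1 :> R by rewrite invr_ge0.
rewrite /norm_R0 /semi_R0 mul1r; split.
  rewrite -[X in _ <= X]mul1r; apply: sqrt_mean_sqr_le => // g; first exact: distR_ge0.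
  by rewrite mul1r; exact: distR_Uiso0_le_grad.
apply: sqrt_mean_sqr_le => // [|g|g]; first lra; first exact: distR_ge0.
exact: distR_grad_le_Uiso0.
Qed.
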